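(* Let $G$ be a finite group of order $n\ge 3$, $k$ a positive integer, $a_1,\dots,a_k,b_1,\dots,b_k$ independent uniformly random elements of $G$, and for $(i,j)\in V=[k]\times[k]$ and $x\in G$ let $I_{(i,j)}(x)$ be the indicator of $\{x=a_ib_j \text{ or } x=b_ja_i\}$. Let $\Gamma=(V,E)$ be the graph with $(i,j)\sim(\ell,m)$ iff ($i=\ell$ and $j\ne m$) or ($i\ne \ell$ and $j=m$). For $x\ne y\in G$ let $\Gamma_{x,y}$ be the graph on $V\times\{x,y\}$ with $(v,z)\sim(u,z')$ iff $\{v,u\}\in E$, and $J(v,z)=I_v(z)$. Let $x\ne y\in G$. (1) Both $\Delta(\Gamma,\{I_v(x)\}_{v\in V})$ and $\Delta^*(\Gamma,\{I_v(x)\}_{v\in V})$ are at most $4\cdot\frac{k^3}{n^2}\exp\big(\frac{6k}{n-2}\big)$. (2) Both $\Delta(\Gamma_{x,y},\{J(v,z)\}_{(v,z)\in V\times\{x,y\}})$ and $\Delta^*(\Gamma_{x,y},\{J(v,z)\}_{(v,z)\in V\times\{x,y\}})$ are at most $16\cdot\frac{k^3}{n^2}\exp\big(\frac{12k}{n-2}\big)$.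
   Context: $[k]=\{1,\dots,k\}$. For a vertex $w$ and a set $S$ of vertices, $w\sim S$ means there is an edge between $w$ and some element of $S$ (so this may include elements of $S$ themselves). For a family of Bernoulli random variables $\{X_i\}_{i\in W}$ and a graph $\Gamma$ on $W$, define $$\Delta(\Gamma,\{X_i\})=\frac12\sum_{i\in W}\sum_{j\sim i}\mathbb{E}[X_iX_j]\prod_{l\sim\{i,j\}}(1-\mathbb{E}[X_l])^{-1},$$ $$\Delta^*(\Gamma,\{X_i\})=\frac12\sum_{i\in W}\sum_{j\sim i}\mathbb{E}[X_i]\mathbb{E}[X_j]\prod_{l\sim\{i,j\}}(1-\mathbb{E}[X_l])^{-1}.$$ *)

From HB Require Import structures.
From mathcomp Require Import all_boot all_order all_algebra all_fingroup.
From mathcomp Require Import reals sequences exp.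
Set Implicit Arguments. Unset Strict Implicit. Unset Printing Implicit Defensive.
Import Order.TTheory GRing.Theory Num.Theory.
Local Open Scope ring_scope.

Section Defs.
Variable R : realType.

Definition Ex (Om : finType) (f : Om -> bool) : R :=
  #|[pred w | f w]|%:R / #|Om|%:R.

(* Delta(Gamma, {X_i}) for a graph given by a relation e on W. l ~ {i,j} means
   e l i || e l j. *)
Definition Delta (Om W : finType) (e : rel W) (X : W -> Om -> bool) : R :=
  2^-1 * \sum_(i : W) \sum_(j : W | e j i)
    Ex (fun w => X i w && X j w) *
    \prod_(l : W | e l i || e l j) (1 - Ex (X l))^-1.

Definition DeltaStar (Om W : finType) (e : rel W) (X : W -> Om -> bool) : R :=
  2^-1 * \sum_(i : W) \sum_(j : W | e j i)
    Ex (X i) * Ex (X j) *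
    \prod_(l : W | e l i || e l j) (1 - Ex (X l))^-1.
End Defs.

(* Sample space: (a_1..a_k, b_1..b_k), uniform on G^k x G^k, i.e. independent
   uniform elements. *)
Definition Omega (gT : finGroupType) (k : nat) : finType :=
  ({ffun 'I_k -> gT} * {ffun 'I_k -> gT})%type.

Definition Vk (k : nat) : finType := ('I_k * 'I_k)%type.

Definition GammaE (k : nat) : rel (Vk k) :=
  fun v u => ((v.1 == u.1) && (v.2 != u.2)) || ((v.1 != u.1) && (v.2 == u.2)).

Definition Ind (gT : finGroupType) (k : nat) (x : gT) (v : Vk k)
  (w : Omega gT k) : bool :=
  (x == (w.1 v.1 * w.2 v.2)%g) || (x == (w.2 v.2 * w.1 v.1)%g).

(* Gamma_{x,y}: vertex set V x {x,y}, encoded as V x bool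
   (true <-> x, false <-> y). *)
Definition Gamma2E (k : nat) : rel (Vk k * bool) :=
  fun p q => GammaE p.1 q.1.

Definition J (gT : finGroupType) (k : nat) (x y : gT) (p : Vk k * bool)
  (w : Omega gT k) : bool :=
  Ind (if p.2 then x else y) p.1 w.

From HB Require Import structures.
From mathcomp Require Import all_boot all_order all_algebra all_fingroup.
From mathcomp Require Import reals sequences exp.
From mathcomp Require Import ring.
Set Implicit Arguments. Unset Strict Implicit. Unset Printing Implicit Defensive.
Import Order.TTheory GRing.Theory Num.Theory.
Local Open Scope ring_scope.

(* Every summand of Delta and Delta^* is bounded uniformly. In the rook graph Gamma a vertex
   has 2k neighbours and at most 3k vertices are adjacent to an edge, so there are k^2 * 2k
   ordered edges, each weighted by a product of at most 3k factors (1 - E I_l)^-1. With all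
   other coordinates fixed, at most two values of b_j satisfy x = a_i b_j or x = b_j a_i, so
   E I_v <= 2/n. Two distinct vertices differ in their b-index (or, exchanging the roles of
   a and b, in their a-index), and shifting these two independent coordinates gives
   E [I_v I_u] <= 4/n^2. Finally (1 - 2/n)^-1 = 1 + 2/(n-2) <= exp(2/(n-2)). In Gamma_{x,y}
   every vertex is doubled, which doubles both neighbourhood counts. *)

Lemma card_sum_nat (T : finType) (f : T -> bool) : #|[pred t | f t]| = (\sum_t f t)%N.
Proof. by rewrite -sum1_card big_mkcond. Qed.

Section Expectation.
Variables (R : realType) (Om : finType).
Implicit Types (f : Om -> bool).

Lemma Ex_ge0 f : 0 <= Ex R f.
Proof. by rewrite /Ex divr_ge0. Qed.

Lemma Ex_le1 f : Ex R f <= 1.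
Proof.
rewrite /Ex; have [->|Om_gt0] := posnP #|Om|; first by rewrite invr0 mulr0.
by rewrite ler_pdivrMr ?ltr0n // mul1r ler_nat max_card.
Qed.

Lemma eq_Ex f g : f =1 g -> Ex R f = Ex R g.
Proof. by move=> fg; rewrite /Ex (eq_card fg). Qed.

Lemma Ex_comp_inj (s : Om -> Om) f : injective s -> Ex R (fun w => f (s w)) = Ex R f.
Proof. by move=> s_inj; rewrite /Ex !card_sum_nat [in RHS](reindex_inj s_inj). Qed.

(* Double counting the pairs (t, w) with [f (s t w)]: each [s t] permutes the sample space. *)
Lemma Ex_le_shift (T : finType) (s : T -> Om -> Om) (B : nat) f :
  (0 < #|T|)%N -> (forall t, injective (s t)) ->
  (forall w, #|[pred t | f (s t w)]| <= B)%N -> Ex R f <= B%:R / #|T|%:R.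
Proof.
move=> T_gt0 s_inj s_le.
have double_count : (#|T| * #|[pred w | f w]| <= B * #|Om|)%N.
  rewrite -sum_nat_const (eq_bigr (fun t => \sum_w f (s t w))%N); last first.
    by move=> t _; rewrite card_sum_nat (reindex_inj (s_inj t)).
  rewrite exchange_big /= mulnC -sum_nat_const leq_sum // => w _.
  by rewrite -(card_sum_nat (fun t => f (s t w))).
rewrite /Ex; have [->|Om_gt0] := posnP #|Om|.
  by rewrite invr0 mulr0 divr_ge0.
rewrite ler_pdivrMr ?ltr0n // mulrAC ler_pdivlMr ?ltr0n //.
by rewrite -!natrM ler_nat mulnC.
Qed.

End Expectation.

Section DeltaBound.
Variables (R : realType) (Om W : finType) (e : rel W) (X : W -> Om -> bool).
Variables (d m : nat) (p c : R).
Hypothesis deg_le : forall i, (#|[pred j | e j i]| <= d)%N.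
Hypothesis edge_nbhd_le : forall i j, e j i -> (#|[pred l | e l i || e l j]| <= m)%N.
Hypothesis p_ge0 : 0 <= p.
Hypothesis c_ge1 : 1 <= c.
Hypothesis inv_1BEx_le : forall l, (1 - Ex R (X l))^-1 <= c.

Lemma edge_sum_le (T : W -> W -> R) :
  (forall i j, e j i -> 0 <= T i j <= p) ->
  2^-1 * \sum_i \sum_(j | e j i) T i j * \prod_(l | e l i || e l j) (1 - Ex R (X l))^-1
  <= 2^-1 * #|W|%:R * d%:R * p * c ^+ m.
Proof.
move=> T_bound; rewrite -!mulrA ler_pM2l ?invr_gt0 ?ltr0n //.
have c_ge0 : 0 <= c by apply: le_trans c_ge1.
have term_le i j : e j i ->
    T i j * \prod_(l | e l i || e l j) (1 - Ex R (X l))^-1 <= p * c ^+ m.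
  move=> eji; have /andP[T_ge0 T_le] := T_bound _ _ eji.
  apply: ler_pM => //.
    by apply: prodr_ge0 => l _; rewrite invr_ge0 subr_ge0 Ex_le1.
  apply: le_trans (_ : \prod_(l | e l i || e l j) c <= _).
    by apply: ler_prod => l _; rewrite inv_1BEx_le invr_ge0 subr_ge0 Ex_le1.
  by rewrite (prodr_const [pred l | e l i || e l j]) ler_weXn2l // edge_nbhd_le.
apply: le_trans (_ : \sum_i \sum_(j | e j i) (p * c ^+ m) <= _).
  by apply: ler_sum => i _; apply: ler_sum => j; apply: term_le.
apply: le_trans (_ : \sum_(i : W) d%:R * (p * c ^+ m) <= _).
  apply: ler_sum => i _; rewrite (sumr_const [pred j | e j i]).
  by rewrite mulr_natl; apply: ler_wpMn2l; rewrite ?mulr_ge0 ?exprn_ge0 ?deg_le.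
by rewrite sumr_const -[lhs in lhs <= _]mulr_natl.
Qed.

Lemma Delta_le : (forall i j, e j i -> Ex R (fun w => X i w && X j w) <= p) ->
  Delta R e X <= 2^-1 * #|W|%:R * d%:R * p * c ^+ m.
Proof. by move=> joint_le; apply: edge_sum_le => i j eji; rewrite Ex_ge0 joint_le. Qed.

Lemma DeltaStar_le : (forall i j, e j i -> Ex R (X i) * Ex R (X j) <= p) ->
  DeltaStar R e X <= 2^-1 * #|W|%:R * d%:R * p * c ^+ m.
Proof.
by move=> prod_le; apply: edge_sum_le => i j eji; rewrite mulr_ge0 ?Ex_ge0 ?prod_le.
Qed.

End DeltaBound.

Lemma card_le_cover2 (T : finType) (P A B : pred T) :
  (forall t, P t -> A t || B t) -> (#|P| <= #|A| + #|B|)%N.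
Proof.
move=> cover; apply: leq_trans (_ : #|[predU A & B]| <= _)%N.
  by apply: subset_leq_card; apply/subsetP => t; rewrite !inE => /cover.
by rewrite -cardUI leq_addr.
Qed.

Lemma card_le_cover3 (T : finType) (P A B C : pred T) :
  (forall t, P t -> [|| A t, B t | C t]) -> (#|P| <= #|A| + #|B| + #|C|)%N.
Proof.
move=> cover; apply: leq_trans (_ : #|[predU A & B]| + #|C| <= _)%N.
  by apply: card_le_cover2 => t /cover; rewrite !inE orbA.
by rewrite leq_add2r -cardUI leq_addr.
Qed.

Lemma card_pred_fst (T U : finType) (A : pred T) :
  #|[pred q : T * U | A q.1]| = (#|A| * #|U|)%N.
Proof. by rewrite -cardX; apply: eq_card => -[t u]; rewrite !inE andbT. Qed.

Section Rook.
Variable k : nat.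
Implicit Types (u v : Vk k) (a : 'I_k).

Lemma card_row a : #|[pred l : Vk k | l.1 == a]| = k.
Proof. by rewrite (card_pred_fst _ (pred1 a)) card1 card_ord mul1n. Qed.

Lemma card_col a : #|[pred l : Vk k | l.2 == a]| = k.
Proof.
transitivity #|[predX 'I_k & pred1 a]|; first by apply: eq_card => -[t s]; rewrite !inE.
by rewrite cardX card1 card_ord muln1.
Qed.

Lemma GammaE_neq u v : GammaE u v -> u != v.
Proof. by apply: contraTneq => ->; rewrite /GammaE !eqxx. Qed.

Lemma GammaE_deg v : (#|[pred u | GammaE u v]| <= 2 * k)%N.
Proof.
apply: leq_trans (@card_le_cover2 _ _ [pred l | l.1 == v.1] [pred l | l.2 == v.2] _) _.
  by move=> u /orP[/andP[eq1 _] | /andP[_ eq2]] /=; rewrite ?eq1 ?eq2 ?orbT.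
by rewrite card_row card_col addnn mul2n.
Qed.

Lemma GammaE_edge_nbhd u v : GammaE v u ->
  (#|[pred l | GammaE l u || GammaE l v]| <= 3 * k)%N.
Proof.
have -> : (3 * k = k + k + k)%N by rewrite !mulSn mul0n addn0 addnA.
case/orP => [/andP[/eqP same _] | /andP[_ /eqP same]].
- apply: leq_trans (@card_le_cover3 _ _ [pred l | l.1 == u.1]
      [pred l | l.2 == u.2] [pred l | l.2 == v.2] _) _; last by rewrite card_row !card_col.
  move=> l; rewrite /GammaE /= same.
  by case: (l.1 == u.1); case: (l.2 == u.2); case: (l.2 == v.2).
- apply: leq_trans (@card_le_cover3 _ _ [pred l | l.2 == u.2]
      [pred l | l.1 == u.1] [pred l | l.1 == v.1] _) _; last by rewrite card_col !card_row.
  move=> l; rewrite /GammaE /= same.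
  by case: (l.2 == u.2); case: (l.1 == u.1); case: (l.1 == v.1).
Qed.

Lemma Gamma2E_deg (p : Vk k * bool) : (#|[pred q | Gamma2E q p]| <= 4 * k)%N.
Proof.
rewrite (card_pred_fst _ [pred u | GammaE u p.1]) card_bool.
by rewrite mulnC -(mulnA 2 2 k) leq_mul2l GammaE_deg.
Qed.

Lemma Gamma2E_edge_nbhd (p q : Vk k * bool) : Gamma2E q p ->
  (#|[pred l | Gamma2E l p || Gamma2E l q]| <= 6 * k)%N.
Proof.
move=> epq; rewrite (card_pred_fst _ [pred u | GammaE u p.1 || GammaE u q.1]).
by rewrite card_bool mulnC -(mulnA 2 3 k) leq_mul2l GammaE_edge_nbhd.
Qed.

End Rook.

Lemma card_preim1_le (T U : finType) (phi : T -> U) (x : U) :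
  injective phi -> (#|[pred t | x == phi t]| <= 1)%N.
Proof. by move=> phi_inj; apply/card_le1_eqP => t1 t2; rewrite !inE => /eqP-> /eqP/phi_inj. Qed.

Lemma card_preim2_le (T U : finType) (phi psi : T -> U) (x : U) :
  injective phi -> injective psi -> (#|[pred t | (x == phi t) || (x == psi t)]| <= 2)%N.
Proof.
move=> phi_inj psi_inj.
apply: leq_trans (@card_le_cover2 _ _ [pred t | x == phi t] [pred t | x == psi t] _) _ => //.
exact: leq_add (card_preim1_le x phi_inj) (card_preim1_le x psi_inj).
Qed.

Section IndicatorBounds.
Variables (R : realType) (gT : finGroupType) (k : nat).
Implicit Types (x : gT) (u v : Vk k) (w : Omega gT k).

Definition shift_b (j : 'I_k) (g : gT) w : Omega gT k :=
  (w.1, [ffun t => if t == j then (w.2 t * g)%g else w.2 t]).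

Lemma shift_b_inj j g : injective (shift_b j g).
Proof.
move=> [a1 b1] [a2 b2] [-> /ffunP b12]; congr pair; apply/ffunP => t.
by move: (b12 t); rewrite !ffunE; case: (t == j) => //; apply: mulIg.
Qed.

Lemma shift_bC j j' g h w : j != j' ->
  shift_b j g (shift_b j' h w) = shift_b j' h (shift_b j g w).
Proof.
move=> jj'; congr pair; apply/ffunP => t; rewrite !ffunE.
by have [->|] := eqVneq t j; rewrite ?(negbTE jj').
Qed.

Lemma Ind_shift_b_other x v j g w : j != v.2 -> Ind x v (shift_b j g w) = Ind x v w.
Proof. by move=> jv; rewrite /Ind /= ffunE [v.2 == j]eq_sym (negbTE jv). Qed.

Lemma card_Ind_shift_b x v w : (#|[pred g | Ind x v (shift_b v.2 g w)]| <= 2)%N.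
Proof.
rewrite (eq_card (B := [pred g | (x == w.1 v.1 * (w.2 v.2 * g)) ||
                                 (x == w.2 v.2 * g * w.1 v.1)]%g)); last first.
  by move=> g; rewrite !inE /Ind ffunE eqxx.
by apply: card_preim2_le => g1 g2 /=; [move/mulgI/mulgI | move/mulIg/mulgI].
Qed.

Lemma Ind_swap x v w : Ind x (v.2, v.1) (w.2, w.1) = Ind x v w.
Proof. by rewrite /Ind orbC. Qed.

Lemma Ex_Ind_le x v : Ex R (Ind x v) <= 2 / #|gT|%:R.
Proof.
apply: (@Ex_le_shift R _ _ (shift_b v.2)); last exact: card_Ind_shift_b.
  by apply/card_gt0P; exists 1%g.
exact: shift_b_inj.
Qed.

Lemma Ex_Ind_pair_le x1 x2 u v : u != v ->
  Ex R (fun w => Ind x1 v w && Ind x2 u w) <= (2 / #|gT|%:R) ^+ 2.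
Proof.
wlog b_ne : x1 x2 u v / u.2 != v.2 => [reduce uv | _].
  have [b_eq|b_ne] := eqVneq u.2 v.2; last by apply: reduce.
  have a_ne : u.1 != v.1.
    apply: contraNneq uv => a_eq; apply/eqP.
    by rewrite [u]surjective_pairing a_eq b_eq -surjective_pairing.
  have swap_inj : injective (fun w : Omega gT k => (w.2, w.1)) by move=> [? ?] [? ?] [-> ->].
  rewrite (@eq_Ex _ _ _ (fun w => Ind x1 (v.2, v.1) (w.2, w.1) && Ind x2 (u.2, u.1) (w.2, w.1))).
    rewrite (Ex_comp_inj _ (fun w => Ind x1 (v.2, v.1) w && Ind x2 (u.2, u.1) w)) //.
    by apply: reduce => //; apply: contra a_ne => /eqP[_ ->].
  by move=> w; rewrite !Ind_swap.
have n_gt0 : (0 < #|gT|)%N by apply/card_gt0P; exists 1%g.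
apply: le_trans (@Ex_le_shift R _ (gT * gT)%type
  (fun t w => shift_b v.2 t.1 (shift_b u.2 t.2 w)) 4 _ _ _ _) _.
- by rewrite card_prod muln_gt0 n_gt0.
- by move=> t w1 w2 /shift_b_inj/shift_b_inj.
- move=> w; rewrite (eq_card (B := [predX [pred g | Ind x1 v (shift_b v.2 g w)]
                                     & [pred h | Ind x2 u (shift_b u.2 h w)]])).
    by rewrite cardX (leq_mul (card_Ind_shift_b _ _ _) (card_Ind_shift_b _ _ _)).
  move=> [g h]; rewrite !inE /= [in Ind x1 v _]shift_bC 1?eq_sym //.
  by rewrite [Ind x2 u _]Ind_shift_b_other 1?eq_sym // Ind_shift_b_other.
by rewrite card_prod natrM expr_div_n -natrX expr2.
Qed.

End IndicatorBounds.

Lemma inv_1B_le_expR (R : realType) (n E : R) : 2 < n -> E <= 2 / n ->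
  (1 - E)^-1 <= expR (2 / (n - 2)).
Proof.
move=> n_gt2 E_le; have n_gt0 : 0 < n by apply: lt_trans n_gt2.
have n2_gt0 : 0 < n - 2 by rewrite subr_gt0.
have q_gt0 : 0 < 1 - 2 / n by rewrite subr_gt0 ltr_pdivrMr // mul1r.
apply: le_trans (_ : (1 - 2 / n)^-1 <= _).
  have E_lt : 1 - 2 / n <= 1 - E by rewrite lerB.
  by rewrite lef_pV2 ?posrE // (lt_le_trans q_gt0).
have -> : (1 - 2 / n)^-1 = 1 + 2 / (n - 2).
  by field; rewrite (gt_eqF n_gt0) (gt_eqF n2_gt0).
exact: expR_ge1Dx.
Qed.

Theorem lemma4p8 (R : realType) (gT : finGroupType) (k : nat) (x y : gT) :
  (2 < #|gT|)%N -> (0 < k)%N -> x != y ->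
  let n : R := #|gT|%:R in
  let kk : R := k%:R in
  (Delta R (@GammaE k) (@Ind gT k x) <= 4 * (kk ^+ 3 / n ^+ 2) * expR (6 * kk / (n - 2))
   /\ DeltaStar R (@GammaE k) (@Ind gT k x) <= 4 * (kk ^+ 3 / n ^+ 2) * expR (6 * kk / (n - 2)))
  /\
  (Delta R (@Gamma2E k) (@J gT k x y) <= 16 * (kk ^+ 3 / n ^+ 2) * expR (12 * kk / (n - 2))
   /\ DeltaStar R (@Gamma2E k) (@J gT k x y) <= 16 * (kk ^+ 3 / n ^+ 2) * expR (12 * kk / (n - 2))).
Proof.
move=> n_gt2 _ _ n kk; have n_gt2R : 2 < n by rewrite ltr_nat.
set c := expR (2 / (n - 2)).
have c_ge1 : 1 <= c by apply: le_trans (expR_ge1Dx _); rewrite lerDl divr_ge0 ?subr_ge0 ?ltW.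
have inv_le z v : (1 - Ex R (@Ind gT k z v))^-1 <= c.
  exact/inv_1B_le_expR/Ex_Ind_le.
have p_ge0 : 0 <= (2 / n) ^+ 2 by rewrite exprn_ge0 ?divr_ge0 ?ler0n.
have prod_le z1 z2 u v : Ex R (@Ind gT k z1 v) * Ex R (@Ind gT k z2 u) <= (2 / n) ^+ 2.
  by rewrite expr2 ler_pM ?Ex_ge0 ?Ex_Ind_le.
have n_neq0 : n != 0 by rewrite gt_eqF // (lt_trans _ n_gt2R).
have n2_neq0 : n - 2 != 0 by rewrite subr_eq0 gt_eqF.
have bound1 : 2^-1 * #|Vk k|%:R * (2 * k)%:R * (2 / n) ^+ 2 * c ^+ (3 * k)
    = 4 * (kk ^+ 3 / n ^+ 2) * expR (6 * kk / (n - 2)).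
  rewrite -expRM_natl card_prod card_ord !natrM; congr (_ * expR _); field => //.
have bound2 : 2^-1 * #|{: Vk k * bool}|%:R * (4 * k)%:R * (2 / n) ^+ 2 * c ^+ (6 * k)
    = 16 * (kk ^+ 3 / n ^+ 2) * expR (12 * kk / (n - 2)).
  rewrite -expRM_natl !card_prod card_ord card_bool !natrM; congr (_ * expR _); field => //.
split; split.
- rewrite -bound1; apply: (Delta_le (@GammaE_deg k) (@GammaE_edge_nbhd k)) => // i j /GammaE_neq.
  exact: Ex_Ind_pair_le.
- by rewrite -bound1; apply: (DeltaStar_le (@GammaE_deg k) (@GammaE_edge_nbhd k)).
- rewrite -bound2; apply: (Delta_le (@Gamma2E_deg k) (@Gamma2E_edge_nbhd k)) => //.
    by move=> l; apply: inv_le.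
  by move=> i j /GammaE_neq; apply: Ex_Ind_pair_le.
- rewrite -bound2; apply: (DeltaStar_le (@Gamma2E_deg k) (@Gamma2E_edge_nbhd k)) => //.
    by move=> l; apply: inv_le.
  by move=> i j _; apply: prod_le.
Qed.
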